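(* Let $n\in\{3,4,5\}$ and let $\overline D_n:=\langle a,b\mid aba=bab,\ ab^2a=b^{n-2}\rangle$. Then $a^{2n}=\mathbf 1$ in $\overline D_n$. More precisely: for $n=3$, $a^3=(ab)^{-3}=(ab)^3$; for $n=4$, $a^4=a^{-4}$; for $n=5$, $a^5=(ba^{-1})^5$, $b^5=(ab^{-1})^5$ and $a^{10}=a^5b^5=\mathbf 1$. *)

Record Group (T : Type) : Type := {
  gmul : T -> T -> T;
  gone : T;
  ginv : T -> T;
  gmulA : forall x y z, gmul x (gmul y z) = gmul (gmul x y) z;
  gmul1 : forall x, gmul gone x = x;
  gmulV : forall x, gmul (ginv x) x = gone
}.

Arguments gmul {T} _ _ _.
Arguments gone {T} _.
Arguments ginv {T} _ _.

Definition gpow {T : Type} (G : Group T) (x : T) (k : nat) : T :=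
  Nat.iter k (gmul G x) (gone G).

Definition Dbar_rel {T : Type} (G : Group T) (n : nat) (a b : T) : Prop :=
  gmul G (gmul G a b) a = gmul G (gmul G b a) b /\
  gmul G (gmul G (gmul G a b) b) a = gpow G b (n - 2).

From Stdlib Require Import Arith Lia.

(* Write D = aba.  Conjugation by D exchanges a and b, so the relation
   ab^2a = b^(n-2) implies its mirror ba^2b = a^(n-2), and the two relations
   give a^n = (aba)^2 = (bab)^2 = b^n =: z, an element commuting with a and b.
   The whole theorem then reduces to z = z^-1, shown separately per case:
   - n = 3:  (ab^-1)^2 = b^-3, and mirrored (ba^-1)^2 = a^-3, i.e. z^-1 = z;
   - n = 4:  b^2 conjugates a to a^-1, hence z = a^4 to z^-1;
   - n = 5:  ab^-1 is conjugate to b (by a^3 b^-1), so (ab^-1)^5 = b^5 = z,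
             and mirrored (ba^-1)^5 = z; as ba^-1 = (ab^-1)^-1 this is z^-1.
   The file first develops the elementary group calculus needed for these
   computations (cancellation, powers, and the relation "c conjugates x to y"),
   then the consequences of the braid relation, then the three cases. *)

Section DbarGroups.

Context {T : Type} (G : Group T).

Local Infix "**" := (gmul G) (at level 40, left associativity).
Local Notation e := (gone G).
Local Notation inv := (ginv G).
Local Notation "x ^+ k" := (gpow G x k) (at level 30, right associativity).

Lemma mulrV x : x ** inv x = e.
Proof.
  assert (Hidem : (x ** inv x) ** (x ** inv x) = x ** inv x).
  { rewrite (gmulA _ G (x ** inv x)), <- (gmulA _ G x (inv x) x), gmulV,
      <- (gmulA _ G x e), gmul1. reflexivity. }
  rewrite <- (gmul1 _ G (x ** inv x)), <- (gmulV _ G (x ** inv x)) at 1.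
  rewrite <- gmulA, Hidem. apply gmulV.
Qed.

Lemma mulr1 x : x ** e = x.
Proof. rewrite <- (gmulV _ G x), gmulA, mulrV, gmul1. reflexivity. Qed.

(* Cancellation rules, stated for left-associated products so that they apply
   to any prefix of a word. *)
Lemma mulrK x y : x ** y ** inv y = x.
Proof. rewrite <- gmulA, mulrV, mulr1. reflexivity. Qed.

Lemma mulrVK x y : x ** inv y ** y = x.
Proof. rewrite <- gmulA, gmulV, mulr1. reflexivity. Qed.

Lemma mulKl x y : inv x ** (x ** y) = y.
Proof. rewrite gmulA, gmulV, gmul1. reflexivity. Qed.

Lemma mul_cancel_l x y y' : x ** y = x ** y' -> y = y'.
Proof. intros H. rewrite <- (mulKl x y), H, mulKl. reflexivity. Qed.

Lemma inv_unique x y : x ** y = e -> y = inv x.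
Proof. intros H. rewrite <- (mulKl x y), H, mulr1. reflexivity. Qed.

Lemma inv_unique_l x y : x ** y = e -> x = inv y.
Proof. intros H. rewrite <- (mulrK x y), H, gmul1. reflexivity. Qed.

Lemma invK x : inv (inv x) = x.
Proof. symmetry. apply inv_unique, gmulV. Qed.

Lemma invM x y : inv (x ** y) = inv y ** inv x.
Proof.
  symmetry. apply inv_unique.
  rewrite gmulA, mulrK, mulrV. reflexivity.
Qed.

Lemma inv_involution_sq z : z = inv z -> z ** z = e.
Proof. intros H. rewrite H at 2. apply mulrV. Qed.

Lemma gpow_add x j k : x ^+ (j + k) = x ^+ j ** x ^+ k.
Proof.
  induction j as [|j IH]; simpl.
  - rewrite gmul1. reflexivity.
  - unfold gpow in *; simpl. rewrite IH, gmulA. reflexivity.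
Qed.

Lemma gpow_Sr x k : x ^+ S k = x ^+ k ** x.
Proof.
  rewrite <- Nat.add_1_r, gpow_add. unfold gpow at 3; simpl.
  rewrite mulr1. reflexivity.
Qed.

Lemma gpow_comm x j k : x ^+ j ** x ^+ k = x ^+ k ** x ^+ j.
Proof. rewrite <- !gpow_add, Nat.add_comm. reflexivity. Qed.

Lemma gpow_inv x k : (inv x) ^+ k = inv (x ^+ k).
Proof.
  induction k as [|k IH].
  - apply inv_unique, gmul1.
  - rewrite (gpow_Sr x k), invM, <- IH. reflexivity.
Qed.

Definition intertwines (c x y : T) : Prop := x ** c = c ** y.

Lemma intertwines_unique {c x y y'} :
  intertwines c x y -> intertwines c x y' -> y = y'.
Proof. unfold intertwines. intros H H'. apply (mul_cancel_l c). congruence. Qed.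

Lemma intertwines_mul {c x y x' y'} :
  intertwines c x y -> intertwines c x' y' -> intertwines c (x ** x') (y ** y').
Proof.
  unfold intertwines. intros H H'.
  rewrite <- gmulA, H', gmulA, H, <- gmulA. reflexivity.
Qed.

Lemma intertwines_pow {c x y} k :
  intertwines c x y -> intertwines c (x ^+ k) (y ^+ k).
Proof.
  intros H. induction k as [|k IH].
  - unfold intertwines; simpl. rewrite gmul1, mulr1. reflexivity.
  - exact (intertwines_mul H IH).
Qed.

Lemma intertwines_inv {c x y} :
  intertwines c x y -> intertwines c (inv x) (inv y).
Proof.
  unfold intertwines. intros H.
  rewrite <- (mulrK (inv x ** c) y), <- (gmulA _ G (inv x)), <- H, gmulA,
    gmulV, gmul1. reflexivity.
Qed.

Lemma pow_double_trivial x n : x ^+ n = inv (x ^+ n) -> x ^+ (2 * n) = e.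
Proof.
  intros H. replace (2 * n) with (n + n) by lia.
  rewrite gpow_add. apply inv_involution_sq, H.
Qed.

(* The inverse of x y^-1 is y x^-1; this links each case to its mirror. *)
Lemma inv_quotient x y : inv (x ** inv y) = y ** inv x.
Proof. rewrite invM, invK. reflexivity. Qed.

Lemma relation_square {x y m} :
  x ** y ** y ** x = y ^+ m -> y ^+ S (S m) = y ** x ** y ** (y ** x ** y).
Proof.
  intros H. change (y ^+ S (S m)) with (y ** y ^+ S m).
  rewrite gpow_Sr, <- H, !gmulA. reflexivity.
Qed.

Section BraidPair.

Context {a b : T}.
Hypothesis Hbraid : a ** b ** a = b ** a ** b.

Lemma garside_conj_a : intertwines (a ** b ** a) a b.
Proof. unfold intertwines. rewrite Hbraid at 1. rewrite !gmulA. reflexivity. Qed.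

Lemma garside_conj_b : intertwines (a ** b ** a) b a.
Proof. unfold intertwines. rewrite !gmulA, <- Hbraid. reflexivity. Qed.

Lemma mirror_relation {m} : a ** b ** b ** a = b ^+ m -> b ** a ** a ** b = a ^+ m.
Proof.
  intros Hrel.
  pose proof garside_conj_a as Ha. pose proof garside_conj_b as Hb.
  assert (Hword := intertwines_mul (intertwines_mul (intertwines_mul Ha Hb) Hb) Ha).
  assert (Hpow := intertwines_pow m Hb).
  rewrite Hrel in Hword. exact (intertwines_unique Hword Hpow).
Qed.

Lemma garside_square : (a ** b) ^+ 3 = a ** b ** a ** (a ** b ** a).
Proof.
  unfold gpow; simpl. rewrite mulr1.
  rewrite Hbraid at 2. rewrite !gmulA. reflexivity.
Qed.

End BraidPair.

Section Presentation.

Context {a b : T}.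

Lemma Dbar_rel_swap {n} : Dbar_rel G n a b -> Dbar_rel G n b a.
Proof.
  intros [Hbraid Hrel]. split.
  - symmetry. exact Hbraid.
  - exact (mirror_relation Hbraid Hrel).
Qed.

(* In D_n the element z = (aba)^2 equals both a^n and b^n; in particular it is
   central, being a power of a and of b. *)
Lemma Dbar_center {n} : Dbar_rel G n a b -> 2 <= n ->
  a ^+ n = a ** b ** a ** (a ** b ** a) /\ b ^+ n = a ** b ** a ** (a ** b ** a).
Proof.
  intros Hrel Hn.
  replace n with (S (S (n - 2))) by lia.
  destruct (Dbar_rel_swap Hrel) as [_ Hba]. destruct Hrel as [Hbraid Hab].
  split.
  - exact (relation_square Hba).
  - rewrite (relation_square Hab), <- Hbraid. reflexivity.
Qed.

Lemma Dbar3_half_turn : Dbar_rel G 3 a b -> (a ** inv b) ^+ 2 = inv (b ^+ 3).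
Proof.
  intros [_ Hrel]. simpl in Hrel. rewrite mulr1 in Hrel.
  assert (Habb : a ** b ** b = b ** inv a).
  { rewrite <- (mulrK (a ** b ** b) a), Hrel. reflexivity. }
  assert (Hctx : forall w, w ** a ** b ** b = w ** b ** inv a).
  { intros w. rewrite <- !(gmulA _ G w), Habb, gmulA. reflexivity. }
  apply inv_unique_l. unfold gpow; simpl. rewrite !mulr1, !gmulA.
  rewrite mulrVK, Hctx, mulrVK, mulrV. reflexivity.
Qed.

(* n = 4: conjugation by b^2 inverts a, hence inverts the central a^4. *)
Lemma Dbar4_involution : Dbar_rel G 4 a b -> a ^+ 4 = inv (a ^+ 4).
Proof.
  intros Hrel.
  destruct (Dbar_center Hrel ltac:(lia)) as [Ha4 Hb4].
  destruct Hrel as [_ Hab]. change (4 - 2) with 2 in Hab.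
  assert (Hinv : intertwines (b ^+ 2) a (inv a)).
  { unfold intertwines. rewrite <- Hab at 2. rewrite mulrK. unfold gpow; simpl.
    rewrite mulr1, gmulA. reflexivity. }
  assert (Hcomm : intertwines (b ^+ 2) (a ^+ 4) (a ^+ 4)).
  { unfold intertwines. rewrite Ha4, <- Hb4. apply gpow_comm. }
  assert (Hpow := intertwines_pow 4 Hinv). rewrite gpow_inv in Hpow.
  exact (intertwines_unique Hcomm Hpow).
Qed.

(* n = 5: the element a b^-1 is conjugate to b (by a^3 b^-1), so both have the
   same fifth power. *)
Lemma Dbar5_quotient_pow : Dbar_rel G 5 a b -> (a ** inv b) ^+ 5 = b ^+ 5.
Proof.
  intros Hrel.
  destruct (Dbar_center Hrel ltac:(lia)) as [Ha5 Hb5].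
  destruct (Dbar_rel_swap Hrel) as [_ Hba]. change (5 - 2) with 3 in Hba.
  assert (Hconj : intertwines (a ^+ 3 ** inv b) b (a ** inv b)).
  { unfold intertwines. rewrite <- Hba at 2. unfold gpow; simpl.
    rewrite mulr1, !gmulA, !mulrK. reflexivity. }
  assert (Hcentral : intertwines (a ^+ 3 ** inv b) (b ^+ 5) (b ^+ 5)).
  { unfold intertwines. symmetry. apply intertwines_mul.
    - unfold intertwines. rewrite Hb5, <- Ha5. apply gpow_comm.
    - apply intertwines_inv. unfold intertwines. rewrite <- gpow_Sr. reflexivity. }
  symmetry. exact (intertwines_unique Hcentral (intertwines_pow 5 Hconj)).
Qed.

End Presentation.

Lemma Dbar3_conclusion (a b : T) : Dbar_rel G 3 a b ->
  a ^+ 6 = e /\ a ^+ 3 = inv ((a ** b) ^+ 3) /\ inv ((a ** b) ^+ 3) = (a ** b) ^+ 3.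
Proof.
  intros Hrel.
  destruct (Dbar_center Hrel ltac:(lia)) as [Ha3 Hb3].
  assert (Hz : b ^+ 3 = inv (a ^+ 3)).
  { pose proof (Dbar3_half_turn (Dbar_rel_swap Hrel)) as Hba.
    rewrite <- inv_quotient, gpow_inv, (Dbar3_half_turn Hrel), invK in Hba.
    exact Hba. }
  rewrite Ha3, Hb3 in Hz.
  split; [apply (pow_double_trivial a 3); rewrite Ha3; exact Hz|].
  rewrite (garside_square (proj1 Hrel)), Ha3.
  split; [exact Hz | symmetry; exact Hz].
Qed.

Lemma Dbar4_conclusion (a b : T) : Dbar_rel G 4 a b ->
  a ^+ 8 = e /\ a ^+ 4 = inv (a ^+ 4).
Proof.
  intros Hrel. pose proof (Dbar4_involution Hrel) as Hz.
  split; [apply (pow_double_trivial a 4)|]; exact Hz.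
Qed.

Lemma Dbar5_conclusion (a b : T) : Dbar_rel G 5 a b ->
  a ^+ 10 = e /\
  a ^+ 5 = (b ** inv a) ^+ 5 /\ b ^+ 5 = (a ** inv b) ^+ 5 /\
  a ^+ 10 = a ^+ 5 ** b ^+ 5 /\ a ^+ 5 ** b ^+ 5 = e.
Proof.
  intros Hrel.
  destruct (Dbar_center Hrel ltac:(lia)) as [Ha5 Hb5].
  pose proof (Dbar5_quotient_pow Hrel) as Hab.
  pose proof (Dbar5_quotient_pow (Dbar_rel_swap Hrel)) as Hba.
  assert (Hinv : a ^+ 5 = inv (b ^+ 5)).
  { rewrite <- Hba, <- inv_quotient, gpow_inv, Hab. reflexivity. }
  assert (Hsquare : a ^+ 10 = a ^+ 5 ** b ^+ 5).
  { change 10 with (5 + 5). rewrite gpow_add, Ha5, Hb5. reflexivity. }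
  assert (Htrivial : a ^+ 5 ** b ^+ 5 = e).
  { rewrite Hinv. apply gmulV. }
  split; [rewrite Hsquare; exact Htrivial|].
  split; [symmetry; exact Hba|].
  split; [symmetry; exact Hab|].
  split; [exact Hsquare | exact Htrivial].
Qed.

End DbarGroups.

Theorem mainTheorem6 (n : nat) (Hn : n = 3 \/ n = 4 \/ n = 5)
  (T : Type) (G : Group T) (a b : T) (Hrel : Dbar_rel G n a b) :
  gpow G a (2 * n) = gone G /\
  (n = 3 -> gpow G a 3 = ginv G (gpow G (gmul G a b) 3) /\
            ginv G (gpow G (gmul G a b) 3) = gpow G (gmul G a b) 3) /\
  (n = 4 -> gpow G a 4 = ginv G (gpow G a 4)) /\
  (n = 5 -> gpow G a 5 = gpow G (gmul G b (ginv G a)) 5 /\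
            gpow G b 5 = gpow G (gmul G a (ginv G b)) 5 /\
            gpow G a 10 = gmul G (gpow G a 5) (gpow G b 5) /\
            gmul G (gpow G a 5) (gpow G b 5) = gone G).
Proof.
  destruct Hn as [-> | [-> | ->]].
  - destruct (Dbar3_conclusion G a b Hrel) as [Horder H3].
    split; [exact Horder|].
    split; [intros _; exact H3|].
    split; discriminate.
  - destruct (Dbar4_conclusion G a b Hrel) as [Horder H4].
    split; [exact Horder|].
    split; [discriminate|].
    split; [intros _; exact H4 | discriminate].
  - destruct (Dbar5_conclusion G a b Hrel) as [Horder H5].
    split; [exact Horder|].
    split; [discriminate|].
    split; [discriminate | intros _; exact H5].
Qed.
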